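(* Let $Br_n^+\subseteq SB_n^+$ denote the submonoid generated by $\sigma_1,\dots,\sigma_{n-1}$. For every element $w\in SB_n^+$ there exists a unique greatest left divisor of $w$ belonging to $Br_n^+$: that is, there is a unique $d\in Br_n^+$ with $w=du$ for some $u\in SB_n^+$ such that every $a\in Br_n^+$ with $w=av$ for some $v\in SB_n^+$ satisfies $d=ab$ for some $b\in SB_n^+$. The analogous statement holds for right divisors.
   Context: Fix $n\ge 2$. The positive singular braid monoid $SB_n^+$ is the monoid with generators $\sigma_1,\dots,\sigma_{n-1},x_1,\dots,x_{n-1}$ and relations: $\sigma_i\sigma_j=\sigma_j\sigma_i$ and $x_ix_j=x_jx_i$ if $|i-j|>1$; $x_i\sigma_j=\sigma_jx_i$ if $|i-j|\ne 1$; $\sigma_i\sigma_{i+1}\sigma_i=\sigma_{i+1}\sigma_i\sigma_{i+1}$; $\sigma_i\sigma_{i+1}x_i=x_{i+1}\sigma_i\sigma_{i+1}$; $\sigma_{i+1}\sigma_ix_{i+1}=x_i\sigma_{i+1}\sigma_i$. *)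

From mathcomp Require Import all_boot.
Set Implicit Arguments. Unset Strict Implicit. Unset Printing Implicit Defensive.

(* Generators of SB_n^+ : sg i = sigma_i, xg i = x_i  (indices 1 <= i <= n-1). *)
Inductive gen : Type := sg of nat | xg of nat.

Definition gen_idx (a : gen) : nat := match a with sg i => i | xg i => i end.
Definition is_sg (a : gen) : bool := match a with sg _ => true | xg _ => false end.

Definition valid_idx (n i : nat) : bool := (1 <= i) && (i < n).

Definition valid_word (n : nat) (w : seq gen) : bool :=
  all (fun a => valid_idx n (gen_idx a)) w.

(* words in sigma_1..sigma_{n-1} only: representatives of elements of Br_n^+ *)
Definition braid_word (n : nat) (w : seq gen) : bool :=
  valid_word n w && all is_sg w.

Definition far (i j : nat) : bool := (i.+1 < j) || (j.+1 < i).
Definition not_adj (i j : nat) : bool := (i != j.+1) && (j != i.+1).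

Inductive defrel (n : nat) : seq gen -> seq gen -> Prop :=
| rel_ss i j : valid_idx n i -> valid_idx n j -> far i j ->
    defrel n [:: sg i; sg j] [:: sg j; sg i]
| rel_xx i j : valid_idx n i -> valid_idx n j -> far i j ->
    defrel n [:: xg i; xg j] [:: xg j; xg i]
| rel_xs i j : valid_idx n i -> valid_idx n j -> not_adj i j ->
    defrel n [:: xg i; sg j] [:: sg j; xg i]
| rel_sss i : valid_idx n i -> valid_idx n i.+1 ->
    defrel n [:: sg i; sg i.+1; sg i] [:: sg i.+1; sg i; sg i.+1]
| rel_ssx i : valid_idx n i -> valid_idx n i.+1 ->
    defrel n [:: sg i; sg i.+1; xg i] [:: xg i.+1; sg i; sg i.+1]
| rel_ssx' i : valid_idx n i -> valid_idx n i.+1 ->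
    defrel n [:: sg i.+1; sg i; xg i.+1] [:: xg i; sg i.+1; sg i].

(* the congruence on words generated by the defining relations;
   SB_n^+ = valid words modulo sbeq n *)
Inductive sbeq (n : nat) : seq gen -> seq gen -> Prop :=
| sbeq_step u v l r : defrel n l r -> sbeq n (u ++ l ++ v) (u ++ r ++ v)
| sbeq_refl w : sbeq n w w
| sbeq_sym w1 w2 : sbeq n w1 w2 -> sbeq n w2 w1
| sbeq_trans w1 w2 w3 : sbeq n w1 w2 -> sbeq n w2 w3 -> sbeq n w1 w3.

Definition greatest_left_braid_divisor (n : nat) (w d : seq gen) : Prop :=
  braid_word n d /\
  (exists u, valid_word n u /\ sbeq n w (d ++ u)) /\
  (forall a, braid_word n a -> (exists v, valid_word n v /\ sbeq n w (a ++ v)) ->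
     exists b, valid_word n b /\ sbeq n d (a ++ b)).

Definition greatest_right_braid_divisor (n : nat) (w d : seq gen) : Prop :=
  braid_word n d /\
  (exists u, valid_word n u /\ sbeq n w (u ++ d)) /\
  (forall a, braid_word n a -> (exists v, valid_word n v /\ sbeq n w (v ++ a)) ->
     exists b, valid_word n b /\ sbeq n d (b ++ a)).

From HB Require Import structures.
From mathcomp Require Import all_boot zify.
From Stdlib Require Import ClassicalEpsilon.
Set Implicit Arguments. Unset Strict Implicit. Unset Printing Implicit Defensive.

(* SB_n^+ has a complemented presentation: two distinct generators a, b occur
   as heads of at most one defining relation a p = b q.  By Dehornoy's
   criterion (an induction on length using word reversing), the cube
   condition then implies that a X = b Y forces X = Y if a = b, and
   X = p Z, Y = q Z otherwise.  Whether the cube condition holds for three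
   generators only depends on their kinds and on which of their indices are
   equal or adjacent; every such pattern occurs among the indices 1..5, so the
   condition is checked by computation in SB_6^+ and transported to all n by
   renaming indices.
   Hence SB_n^+ is left cancellative, and two braid left divisors of w have a
   common braid multiple that still left-divides w (induction on the length of
   w).  As the relations preserve length, a braid left divisor of w of maximal
   length is the greatest one, and it is unique.  Reversing words maps the
   relations to relations, which turns right divisors into left divisors. *)

Definition gen_code (a : gen) : nat * bool := (gen_idx a, is_sg a).
Definition gen_decode (p : nat * bool) : gen := if p.2 then sg p.1 else xg p.1.
Lemma gen_codeK : cancel gen_code gen_decode. Proof. by case. Qed.
HB.instance Definition _ := Equality.copy gen (can_type gen_codeK).

Lemma far_sym i j : far i j = far j i.
Proof. by rewrite /far orbC. Qed.

Lemma not_adj_sym i j : not_adj i j = not_adj j i.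
Proof. by rewrite /not_adj andbC. Qed.

Lemma farE i j : far i j = [&& i != j, i != j.+1 & j != i.+1].
Proof. rewrite /far; lia. Qed.

Section Congruence.
Variable n : nat.

Lemma sbeq_cat p s w1 w2 : sbeq n w1 w2 -> sbeq n (p ++ w1 ++ s) (p ++ w2 ++ s).
Proof.
elim=> [u v l r H | w | w1' w2' _ IH | w1' w2' w3' _ IH1 _ IH2].
- have E l' : p ++ (u ++ l' ++ v) ++ s = (p ++ u) ++ l' ++ (v ++ s) by rewrite !catA.
  rewrite !E; exact: sbeq_step.
- exact: sbeq_refl.
- exact: sbeq_sym.
- exact: sbeq_trans IH2.
Qed.

Lemma sbeq_catl p w1 w2 : sbeq n w1 w2 -> sbeq n (p ++ w1) (p ++ w2).
Proof. by move=> H; have := sbeq_cat p [::] H; rewrite !cats0. Qed.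

Lemma sbeq_catr s w1 w2 : sbeq n w1 w2 -> sbeq n (w1 ++ s) (w2 ++ s).
Proof. exact: sbeq_cat [::] s w1 w2. Qed.

Lemma sbeq_cons a w1 w2 : sbeq n w1 w2 -> sbeq n (a :: w1) (a :: w2).
Proof. exact: sbeq_catl [:: a] w1 w2. Qed.

Lemma sbeq_rel l r : defrel n l r -> sbeq n l r.
Proof. by move=> H; have := sbeq_step [::] [::] H; rewrite /= !cats0. Qed.

Lemma sbeq_relV l r : defrel n r l -> sbeq n l r.
Proof. by move/sbeq_rel/sbeq_sym. Qed.

Lemma sbeq_invariant (T : Type) (F : seq gen -> T) :
  (forall l r, defrel n l r -> forall u v, F (u ++ l ++ v) = F (u ++ r ++ v)) ->
  forall w1 w2, sbeq n w1 w2 -> F w1 = F w2.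
Proof.
move=> FE w1 w2; elim=> [u v l r H | w | w1' w2' _ IH | w1' w2' w3' _ IH1 _ IH2] //.
- exact: FE.
- by rewrite IH1.
Qed.

Lemma sbeq_size w1 w2 : sbeq n w1 w2 -> size w1 = size w2.
Proof.
apply: sbeq_invariant => l r H u v; rewrite !size_cat; congr (_ + (_ + _)).
by case: H.
Qed.

Lemma sbeq_all_idx (P : pred nat) w1 w2 : sbeq n w1 w2 ->
  all (fun a => P (gen_idx a)) w1 = all (fun a => P (gen_idx a)) w2.
Proof.
apply: sbeq_invariant => l r H u v; rewrite !all_cat; congr (_ && (_ && _)).
by case: H => * /=; rewrite ?andbT //; case: (P _); case: (P _).
Qed.

Lemma sbeq_valid w1 w2 : sbeq n w1 w2 -> valid_word n w1 = valid_word n w2.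
Proof. exact: sbeq_all_idx. Qed.

Lemma sbeq_all_sg w1 w2 : sbeq n w1 w2 -> all is_sg w1 = all is_sg w2.
Proof.
apply: sbeq_invariant => l r H u v; rewrite !all_cat; congr (_ && (_ && _)).
by case: H.
Qed.

Lemma sbeq_braid w1 w2 : sbeq n w1 w2 -> braid_word n w1 = braid_word n w2.
Proof. by move=> E; rewrite /braid_word (sbeq_valid E) (sbeq_all_sg E). Qed.

Lemma valid_word_cat u v : valid_word n (u ++ v) = valid_word n u && valid_word n v.
Proof. exact: all_cat. Qed.

Lemma braid_word_cat u v : braid_word n (u ++ v) = braid_word n u && braid_word n v.
Proof.
rewrite /braid_word valid_word_cat all_cat.
by case: (valid_word n u); case: (valid_word n v); case: (all is_sg u).
Qed.

Lemma sbeq_rev w1 w2 : sbeq n w1 w2 -> sbeq n (rev w1) (rev w2).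
Proof.
elim=> [u v l r H | w | w1' w2' _ IH | w1' w2' w3' _ IH1 _ IH2].
- rewrite !rev_cat -!catA; apply: sbeq_cat.
  case: H => [i j vi vj f | i j vi vj f | i j vi vj f | i vi vi1 | i vi vi1 | i vi vi1];
    rewrite /rev /=.
  + by apply: sbeq_rel; apply: rel_ss; rewrite // far_sym.
  + by apply: sbeq_rel; apply: rel_xx; rewrite // far_sym.
  + by apply: sbeq_relV; apply: rel_xs.
  + by apply: sbeq_rel; apply: rel_sss.
  + by apply: sbeq_relV; apply: rel_ssx'.
  + by apply: sbeq_relV; apply: rel_ssx.
- exact: sbeq_refl.
- exact: sbeq_sym.
- exact: sbeq_trans IH2.
Qed.

Lemma valid_word_rev w : valid_word n (rev w) = valid_word n w.
Proof. exact: all_rev. Qed.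

Lemma braid_word_rev w : braid_word n (rev w) = braid_word n w.
Proof. by rewrite /braid_word valid_word_rev all_rev. Qed.

End Congruence.

(* [complement n a b = Some (p, q)] when a p = b q is, up to symmetry, the
   defining relation of SB_n^+ with heads a and b; [None] when there is none. *)
Definition complement (n : nat) (a b : gen) : option (seq gen * seq gen) :=
  if valid_idx n (gen_idx a) && valid_idx n (gen_idx b) then
  match a, b with
  | sg i, sg j => if i == j then None else if far i j then Some ([:: sg j], [:: sg i])
                  else Some ([:: sg j; sg i], [:: sg i; sg j])
  | xg i, xg j => if far i j then Some ([:: xg j], [:: xg i]) else None
  | xg i, sg j => if not_adj i j then Some ([:: sg j], [:: xg i])
                  else Some ([:: sg j; sg i], [:: sg i; xg j])
  | sg j, xg i => if not_adj i j then Some ([:: xg i], [:: sg j])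
                  else Some ([:: sg i; xg j], [:: sg j; sg i])
  end else None.

Section Complement.
Variable n : nat.

Lemma complement_swap a b p q :
  complement n a b = Some (p, q) -> complement n b a = Some (q, p).
Proof.
have -> : complement n b a = omap (fun pq => (pq.2, pq.1)) (complement n a b).
  rewrite /complement andbC; case: (_ && _) => //.
  by case: a b => i [] j /=; rewrite ?(eq_sym j i) ?(far_sym j i); repeat case: ifP.
by move=> ->.
Qed.

Lemma complement_valid_idx a b p q : complement n a b = Some (p, q) ->
  valid_idx n (gen_idx a) /\ valid_idx n (gen_idx b).
Proof. by rewrite /complement; case: andP. Qed.

Lemma complement_neq a b p q : complement n a b = Some (p, q) -> a <> b.
Proof.
move=> + E; subst b; rewrite /complement; case: (_ && _) => //.
by case: a => i /=; rewrite ?eqxx // farE eqxx.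
Qed.

Lemma complement_idx a b p q : complement n a b = Some (p, q) ->
  all (fun c => gen_idx c \in [:: gen_idx a; gen_idx b]) (p ++ q).
Proof.
rewrite /complement; case: (_ && _) => //.
case: a b => i [] j /=; (repeat case: ifP => _) => E;
  first [discriminate E | case: E => <- <- /=; by rewrite ?inE ?eqxx ?orbT].
Qed.

Lemma complement_valid a b p q : complement n a b = Some (p, q) ->
  valid_word n p /\ valid_word n q.
Proof.
move=> H; have [va vb] := complement_valid_idx H.
apply/andP; rewrite -valid_word_cat; apply: sub_all (complement_idx H) => c.
by rewrite !inE => /orP[] /eqP ->.
Qed.

Lemma complement_braid a b p q : is_sg a -> is_sg b ->
  complement n a b = Some (p, q) -> braid_word n p /\ braid_word n q.
Proof.
case: a b => [i|i] [j|j] // _ _ H; have [vp vq] := complement_valid H.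
rewrite /braid_word vp vq; move: H; rewrite /complement; case: (_ && _) => //.
by case: ifP => // _; case: ifP => _ [<- <-].
Qed.

Lemma defrel_complement l r : defrel n l r ->
  exists a b l' r', [/\ l = a :: l', r = b :: r' & complement n a b = Some (l', r')].
Proof.
case=> [i j vi vj f | i j vi vj f | i j vi vj f | i vi vi1 | i vi vi1 | i vi vi1];
  do 4 eexists; split; try reflexivity; rewrite /complement /= ?vi ?vj ?vi1 //=.
- by rewrite f; move: f; rewrite farE => /andP[/negbTE ->].
- by rewrite f.
- by rewrite f.
- by rewrite farE ltn_eqF // eqxx andbF.
- by have -> : not_adj i.+1 i = false by rewrite /not_adj; lia.
- by have -> : not_adj i i.+1 = false by rewrite /not_adj; lia.
Qed.

Lemma complement_sbeq a b p q : complement n a b = Some (p, q) -> sbeq n (a :: p) (b :: q).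
Proof.
rewrite /complement; case: andP => // -[vi vj].
case: a b vi vj => i [] j /= vi vj.
- case: ifP => // ne; case: ifP => f [<- <-]; first by apply: sbeq_rel; apply: rel_ss.
  have [E|E] : j = i.+1 \/ i = j.+1 by move: ne f; rewrite /far; lia.
  + by subst; apply: sbeq_rel; apply: rel_sss.
  + by subst; apply: sbeq_relV; apply: rel_sss.
- case: ifP => na [<- <-]; first by apply: sbeq_relV; apply: rel_xs; rewrite // not_adj_sym.
  have [E|E] : j = i.+1 \/ i = j.+1 by move: na; rewrite /not_adj; lia.
  + by subst; apply: sbeq_rel; apply: rel_ssx.
  + by subst; apply: sbeq_rel; apply: rel_ssx'.
- case: ifP => na [<- <-]; first by apply: sbeq_rel; apply: rel_xs.
  have [E|E] : j = i.+1 \/ i = j.+1 by move: na; rewrite /not_adj; lia.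
  + by subst; apply: sbeq_relV; apply: rel_ssx'.
  + by subst; apply: sbeq_relV; apply: rel_ssx.
- by case: ifP => // f [<- <-]; apply: sbeq_rel; apply: rel_xx.
Qed.

End Complement.

(* Dehornoy's right reversing: [Reversed p' q'] means that p^-1 q was reversed
   into p' q'^-1, so that p p' = q q'. *)
Inductive reversal := Reversed of seq gen & seq gen | Clash | OutOfFuel.

Fixpoint reversing (n fuel : nat) (p q : seq gen) : reversal :=
  match fuel with 0 => OutOfFuel | f.+1 =>
  match p, q with
  | [::], _ => Reversed q [::]
  | _, [::] => Reversed [::] p
  | a :: p1, b :: q1 =>
    if a == b then reversing n f p1 q1 else
    match complement n a b with
    | None => Clash
    | Some (fa, fb) =>
      match reversing n f p1 fa with
      | Reversed u1 z1 =>
        match reversing n f q1 fb with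
        | Reversed v2 z2 =>
          match reversing n f z1 z2 with
          | Reversed w1 w2 => Reversed (u1 ++ w1) (v2 ++ w2)
          | r => r end
        | r => r end
      | r => r end
    end
  end end.

Section Completeness.
Variable n : nat.

Definition complement_split a X b Y : Prop :=
  if a == b then sbeq n X Y else
  exists p q Z, [/\ complement n a b = Some (p, q), sbeq n X (p ++ Z) & sbeq n Y (q ++ Z)].

Definition split_below K := forall a b X Y,
  size X < K -> sbeq n (a :: X) (b :: Y) -> complement_split a X b Y.

(* [OutOfFuel] makes the condition false, so the fixed fuel is harmless: it
   only has to suffice for the computation in [cube_checkb_6]. *)
Definition cube_condition a b c : Prop :=
  forall fca fac fcb fbc, complement n c a = Some (fca, fac) ->
    complement n c b = Some (fcb, fbc) ->
  match reversing n 20 fca fcb with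
  | Reversed r1 r2 => (a = b -> sbeq n (fac ++ r1) (fbc ++ r2)) /\
      (a <> b -> exists fab fba s, [/\ complement n a b = Some (fab, fba),
          sbeq n (fac ++ r1) (fab ++ s) & sbeq n (fbc ++ r2) (fba ++ s)])
  | Clash => True
  | OutOfFuel => False
  end.

Lemma complement_split_sym a X b Y : complement_split a X b Y -> complement_split b Y a X.
Proof.
rewrite /complement_split eq_sym; case: eqP => _; first exact: sbeq_sym.
case=> p [q [Z [Hc H1 H2]]]; exists q, p, Z; split => //; exact: complement_swap.
Qed.

Lemma complement_split_step u v l r a X b Y : defrel n l r ->
  u ++ l ++ v = a :: X -> u ++ r ++ v = b :: Y -> complement_split a X b Y.
Proof.
rewrite /complement_split => H; case: u => [|c u] /=.
- have [a' [b' [l' [r' [-> -> Hc]]]]] := defrel_complement H.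
  case=> <- <- [<- <-]; case: eqP => [E|_]; first by case: (complement_neq Hc).
  by exists l', r', v; split => //; exact: sbeq_refl.
- case=> <- <- [<- <-]; rewrite eqxx.
  by apply: sbeq_catl; apply: sbeq_catr; exact: sbeq_rel.
Qed.

Lemma reversing_factors K fuel p q U V : split_below K ->
  size (p ++ U) <= K -> sbeq n (p ++ U) (q ++ V) ->
  match reversing n fuel p q with
  | Reversed p' q' => exists W, sbeq n U (p' ++ W) /\ sbeq n V (q' ++ W)
  | Clash => False
  | OutOfFuel => True
  end.
Proof.
move=> splitK; elim: fuel p q U V => [//|f IH] [|a p1] [|b q1] U V /= sz E.
- by exists V; split => //; exact: sbeq_refl.
- by exists V; split => //; exact: sbeq_refl.
- by exists U; split; [exact: sbeq_refl | exact: sbeq_sym].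
have sz1 : size (p1 ++ U) < K by move: sz; rewrite /= size_cat.
have s1 := ltnW sz1.
move: (splitK a b _ _ sz1 E); rewrite /complement_split; case: eqP => [_|_]; first exact: IH.
case=> fa [fb [Z [Hc E1 E2]]]; rewrite Hc.
have := IH p1 fa U Z s1 E1; case: (reversing n f p1 fa) => // u1 z1 [W1 [U1 Z1]].
have s2 : size (q1 ++ V) <= K by have [<-] := sbeq_size E.
have := IH q1 fb V Z s2 E2; case: (reversing n f q1 fb) => // v2 z2 [W2 [V2 Z2]].
have E3 : sbeq n (z1 ++ W1) (z2 ++ W2) by apply: sbeq_trans (sbeq_sym Z1) Z2.
have s3 : size (z1 ++ W1) <= K.
  by rewrite -(sbeq_size Z1); apply: leq_trans s1; rewrite (sbeq_size E1) size_cat leq_addl.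
have := IH z1 z2 W1 W2 s3 E3; case: (reversing n f z1 z2) => // w1 w2 [W [W1' W2']].
exists W; split; rewrite -catA.
- by apply: sbeq_trans U1 _; exact: sbeq_catl.
- by apply: sbeq_trans V2 _; exact: sbeq_catl.
Qed.

Lemma complement_split_trans a X c Z b Y : split_below (size Z) -> cube_condition a b c ->
  complement_split a X c Z -> complement_split c Z b Y -> complement_split a X b Y.
Proof.
move=> splitZ cube; rewrite /complement_split.
case: (a =P c) => [<-|ac].
  move=> E1; case: (a =P b) => [ab|ab]; first exact: sbeq_trans.
  by case=> p [q [W [Hc E2 E3]]]; exists p, q, W; split => //; apply: sbeq_trans E2.
case=> fac [fca [U [Hac EX EZ]]].
case: (c =P b) => [<-|cb].
  move=> EY; case: (a =P c) => // _.
  by exists fac, fca, U; split => //; apply: sbeq_trans (sbeq_sym EY) EZ.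
case=> fcb [fbc [V [Hcb EZ' EY]]].
have E : sbeq n (fca ++ U) (fcb ++ V) by apply: sbeq_trans (sbeq_sym EZ) EZ'.
have sz : size (fca ++ U) <= size Z by rewrite (sbeq_size EZ).
have := reversing_factors 20 splitZ sz E; have := cube _ _ _ _ (complement_swap Hac) Hcb.
case: (reversing n 20 fca fcb) => // r1 r2 [C1 C2] [W [UW VW]].
have XW : sbeq n X ((fac ++ r1) ++ W).
  by rewrite -catA; apply: sbeq_trans EX _; exact: sbeq_catl.
have YW : sbeq n Y ((fbc ++ r2) ++ W).
  by rewrite -catA; apply: sbeq_trans EY _; exact: sbeq_catl.
case: (a =P b) => [ab|ab].
  apply: sbeq_trans XW _; apply: sbeq_sym; apply: sbeq_trans YW _.
  exact: sbeq_catr (sbeq_sym (C1 ab)).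
have [fab [fba [s [Hab S1 S2]]]] := C2 ab.
exists fab, fba, (s ++ W); split => //; rewrite catA.
- by apply: sbeq_trans XW _; exact: sbeq_catr.
- by apply: sbeq_trans YW _; exact: sbeq_catr.
Qed.

Hypothesis cube : forall a b c, cube_condition a b c.

Lemma sbeq_complement_split a b X Y :
  sbeq n (a :: X) (b :: Y) -> complement_split a X b Y.
Proof.
move sX: (size X) => m; elim/ltn_ind: m a b X Y sX => m IHm a b X Y sX EXY.
have splitm : split_below m by move=> a' b' X' Y' lt; apply: IHm lt _ _ _ _ erefl.
suff key : forall w1 w2, sbeq n w1 w2 -> forall a X b Y,
    w1 = a :: X -> w2 = b :: Y -> size X = m -> complement_split a X b Y.
  exact: key EXY a X b Y erefl erefl sX.
move=> w1 w2; elim=> [u v l r H | w | w1' w2' E IH | w1' w2' w3' E1 IH1 E2 IH2]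
  a' X' b' Y' e1 e2 sX'.
- exact: complement_split_step H e1 e2.
- by move: e2; rewrite e1 => -[<- <-]; rewrite /complement_split eqxx; exact: sbeq_refl.
- have sY : size Y' = m by have := sbeq_size E; rewrite e1 e2 /= sX' => -[].
  exact/complement_split_sym/IH.
- have := sbeq_size E1; rewrite e1.
  case: w2' E1 IH1 E2 IH2 => [//|c Z] E1 IH1 E2 IH2 [sZ].
  apply: (@complement_split_trans a' X' c Z b' Y').
  + by rewrite -sZ sX'.
  + exact: cube.
  + exact: IH1.
  + by apply: IH2; rewrite // -sZ.
Qed.

End Completeness.

Definition rename_gen (psi : nat -> nat) (a : gen) : gen :=
  match a with sg i => sg (psi i) | xg i => xg (psi i) end.

Definition map_reversal (f : gen -> gen) (r : reversal) : reversal :=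
  match r with Reversed p q => Reversed (map f p) (map f q) | r => r end.

Definition idx_in (T : seq nat) (a : gen) : bool := gen_idx a \in T.

Definition index_embedding (n' n : nat) (psi : nat -> nat) (T : seq nat) :=
  forall p q, p \in T -> q \in T ->
  [/\ (psi p == psi q) = (p == q), (psi p == (psi q).+1) = (p == q.+1)
    & valid_idx n (psi p) = valid_idx n' p].

Section Rename.
Variables (n' n : nat) (psi : nat -> nat) (T : seq nat).

Lemma complement_idx_in a b p q : complement n' a b = Some (p, q) ->
  idx_in T a -> idx_in T b -> all (idx_in T) p && all (idx_in T) q.
Proof.
move=> H ia ib; rewrite -all_cat; apply: sub_all (complement_idx H) => c.
by rewrite /idx_in !inE => /orP[] /eqP ->.
Qed.

Lemma reversing_idx_in fuel p q p' q' : all (idx_in T) p -> all (idx_in T) q ->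
  reversing n' fuel p q = Reversed p' q' -> all (idx_in T) p' && all (idx_in T) q'.
Proof.
elim: fuel p q p' q' => [//|f IH] [|a p1] [|b q1] p' q' /=.
- by move=> _ _ [<- <-].
- by move=> _ iq [<- <-]; rewrite andbT.
- by move=> ip _ [<- <-].
move=> /andP[ia ip] /andP[ib iq].
case: eqP => _; first exact: IH.
case Hc: (complement n' a b) => [[fa fb]|//].
have /andP[ifa ifb] := complement_idx_in Hc ia ib.
case E1: (reversing n' f p1 fa) => [u1 z1| |] //.
have /andP[iu1 iz1] := IH _ _ _ _ ip ifa E1.
case E2: (reversing n' f q1 fb) => [v2 z2| |] //.
have /andP[iv2 iz2] := IH _ _ _ _ iq ifb E2.
case E3: (reversing n' f z1 z2) => [w1 w2| |] //.
have /andP[iw1 iw2] := IH _ _ _ _ iz1 iz2 E3.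
by case=> <- <-; rewrite !all_cat iu1 iw1 iv2 iw2.
Qed.

Hypothesis psiT : index_embedding n' n psi T.

Lemma rename_gen_eq a b : idx_in T a -> idx_in T b ->
  (rename_gen psi a == rename_gen psi b) = (a == b).
Proof.
move=> ia ib; apply/eqP/eqP => [|-> //]; have [e _ _] := psiT ia ib.
by case: a b ia ib e => i [] j //= _ _ e [] /eqP; rewrite e => /eqP ->.
Qed.

Lemma complement_rename a b : idx_in T a -> idx_in T b ->
  complement n (rename_gen psi a) (rename_gen psi b) =
  omap (fun pq => (map (rename_gen psi) pq.1, map (rename_gen psi) pq.2)) (complement n' a b).
Proof.
move=> ia ib; have [e1 s1 v1] := psiT ia ib; have [_ s2 v2] := psiT ib ia.
have idx c : gen_idx (rename_gen psi c) = psi (gen_idx c) by case: c.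
rewrite /complement !idx v1 v2; case: (_ && _) => //.
case: a b ia ib e1 s1 s2 {v1 v2} => i [] j /= _ _ e1 s1 s2;
  rewrite ?farE /not_adj ?e1 ?s1 ?s2;
  by case: (i == j); case: (i == j.+1); case: (j == i.+1).
Qed.

Lemma reversing_rename fuel p q : all (idx_in T) p -> all (idx_in T) q ->
  reversing n fuel (map (rename_gen psi) p) (map (rename_gen psi) q) =
  map_reversal (rename_gen psi) (reversing n' fuel p q).
Proof.
elim: fuel p q => [//|f IH] [|a p1] [|b q1] //= /andP[ia ip] /andP[ib iq].
rewrite rename_gen_eq //; case: eqP => _; first exact: IH.
rewrite complement_rename //; case Hc: (complement n' a b) => [[fa fb]|//] /=.
have /andP[ifa ifb] := complement_idx_in Hc ia ib.
rewrite IH //; case E1: (reversing n' f p1 fa) => [u1 z1| |] //=.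
have /andP[iu1 iz1] := reversing_idx_in ip ifa E1.
rewrite IH //; case E2: (reversing n' f q1 fb) => [v2 z2| |] //=.
have /andP[iv2 iz2] := reversing_idx_in iq ifb E2.
rewrite IH //; case E3: (reversing n' f z1 z2) => [w1 w2| |] //=.
by rewrite !map_cat.
Qed.

Lemma defrel_rename l r : defrel n' l r -> all (idx_in T) l ->
  defrel n (map (rename_gen psi) l) (map (rename_gen psi) r).
Proof.
have V p : p \in T -> valid_idx n' p -> valid_idx n (psi p).
  by move=> ip vp; have [_ _ ->] := psiT ip ip.
have F p q : p \in T -> q \in T -> far (psi p) (psi q) = far p q.
  move=> ip iq; have [e1 s1 _] := psiT ip iq; have [_ s2 _] := psiT iq ip.
  by rewrite !farE e1 s1 s2.
have NA p q : p \in T -> q \in T -> not_adj (psi p) (psi q) = not_adj p q.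
  move=> ip iq; have [_ s1 _] := psiT ip iq; have [_ s2 _] := psiT iq ip.
  by rewrite /not_adj s1 s2.
have S p : p \in T -> p.+1 \in T -> psi p.+1 = (psi p).+1.
  by move=> ip ip1; have [_ s _] := psiT ip1 ip; apply/eqP; rewrite s.
case=> [i j vi vj f | i j vi vj f | i j vi vj f | i vi vi1 | i vi vi1 | i vi vi1];
  rewrite /idx_in /= ?andbT.
- by move=> /andP[i1 i2]; apply: rel_ss; rewrite ?F ?V.
- by move=> /andP[i1 i2]; apply: rel_xx; rewrite ?F ?V.
- by move=> /andP[i1 i2]; apply: rel_xs; rewrite ?NA ?V.
- move=> /and3P[i1 i2 _]; rewrite (S _ i1 i2).
  by apply: rel_sss; rewrite -?(S _ i1 i2); apply: V.
- move=> /and3P[i1 i2 _]; rewrite (S _ i1 i2).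
  by apply: rel_ssx; rewrite -?(S _ i1 i2); apply: V.
- move=> /and3P[i2 i1 _]; rewrite (S _ i1 i2).
  by apply: rel_ssx'; rewrite -?(S _ i1 i2); apply: V.
Qed.

Lemma sbeq_rename w1 w2 : sbeq n' w1 w2 -> all (idx_in T) w1 ->
  sbeq n (map (rename_gen psi) w1) (map (rename_gen psi) w2).
Proof.
elim=> [u v l r H | w | w1' w2' E IH | w1' w2' w3' E1 IH1 E2 IH2].
- rewrite !all_cat => /and3P[_ il _]; rewrite !map_cat; apply: sbeq_step.
  exact: defrel_rename.
- by move=> _; exact: sbeq_refl.
- by move=> i; apply: sbeq_sym; apply: IH; rewrite /idx_in (sbeq_all_idx (mem T) E).
- move=> i; apply: sbeq_trans (IH1 i) _; apply: IH2.
  by rewrite /idx_in -(sbeq_all_idx (mem T) E1).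
Qed.

End Rename.

(* In every defining relation a p = d q, the head of p has the index of d. *)
Definition head_candidates (p : seq gen) : seq gen :=
  match p with
  | [:: b] => [:: b]
  | [:: b; _] => [:: sg (gen_idx b); xg (gen_idx b)]
  | _ => [::]
  end.

Definition relation_images (n : nat) (l : seq gen) : seq (seq gen) :=
  if l is a :: p then
    pmap (fun d => if complement n a d is Some (p', q) then
                     if p' == p then Some (d :: q) else None
                   else None) (head_candidates p)
  else [::].

Fixpoint rewrites1 (n : nat) (w : seq gen) : seq (seq gen) :=
  match w with
  | [::] => [::]
  | a :: w' => [seq r ++ drop 2 w | r <- relation_images n (take 2 w)] ++
               [seq r ++ drop 3 w | r <- relation_images n (take 3 w)] ++
               [seq a :: u | u <- rewrites1 n w']
  end.

Fixpoint rewrite_closure (n fuel : nat) (S : seq (seq gen)) : seq (seq gen) :=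
  if fuel is f.+1 then rewrite_closure n f (undup (S ++ flatten (map (rewrites1 n) S)))
  else S.

Definition rewrites_to (n : nat) (w1 w2 : seq gen) : bool :=
  w2 \in rewrite_closure n 8 [:: w1].

Section Enumeration.
Variable n : nat.

Lemma relation_images_sound l r : r \in relation_images n l -> sbeq n l r.
Proof.
case: l => [//|a p] /=; rewrite mem_pmap => /mapP[d _].
case Hc: (complement n a d) => [[p' q]|//]; case: eqP => // <- [->].
exact: complement_sbeq.
Qed.

Lemma rewrites1_sound w w' : w' \in rewrites1 n w -> sbeq n w w'.
Proof.
elim: w w' => [//|a w IH] w' /=; rewrite !mem_cat => /or3P[] /mapP[r Hr ->].
- by rewrite -{1}(cat_take_drop 2 (a :: w)); apply/sbeq_catr/relation_images_sound.
- by rewrite -{1}(cat_take_drop 3 (a :: w)); apply/sbeq_catr/relation_images_sound.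
- exact/sbeq_cons/IH.
Qed.

Lemma rewrite_closure_sound fuel w0 S : (forall w, w \in S -> sbeq n w0 w) ->
  forall w, w \in rewrite_closure n fuel S -> sbeq n w0 w.
Proof.
elim: fuel S => [//|f IH] S HS /=; apply: IH => w.
rewrite mem_undup mem_cat => /orP[/HS //|].
case/flattenP => s /mapP [u /HS Hu ->] /rewrites1_sound; exact: sbeq_trans.
Qed.

Lemma rewrites_to_sound w1 w2 : rewrites_to n w1 w2 -> sbeq n w1 w2.
Proof.
by apply: rewrite_closure_sound => w; rewrite inE => /eqP ->; exact: sbeq_refl.
Qed.

End Enumeration.

(* A decidable sufficient condition for [cube_condition n a b c]: the bounded
   rewrite closure of fac r1 must contain a word fab s with fbc r2 = fba s. *)
Definition cube_checkb (n : nat) (a b c : gen) : bool :=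
  match complement n c a, complement n c b with
  | Some (fca, fac), Some (fcb, fbc) =>
    match reversing n 20 fca fcb with
    | Reversed r1 r2 =>
      if a == b then rewrites_to n (fac ++ r1) (fbc ++ r2) else
      if complement n a b is Some (fab, fba) then
        has (fun w => (take (size fab) w == fab) &&
                      rewrites_to n (fbc ++ r2) (fba ++ drop (size fab) w))
            (rewrite_closure n 8 [:: fac ++ r1])
      else false
    | Clash => true
    | OutOfFuel => false
    end
  | _, _ => true
  end.

Definition letters : seq gen := [seq sg i | i <- iota 1 5] ++ [seq xg i | i <- iota 1 5].

Lemma cube_checkb_6 :
  all (fun a => all (fun b => all (cube_checkb 6 a b) letters) letters) letters.
Proof. by vm_compute. Qed.

Arguments reversing : simpl never.
Arguments rewrite_closure : simpl never.
Arguments rewrites_to : simpl never.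

Lemma cube_condition_rename n' n psi a b c : cube_checkb n' a b c ->
  index_embedding n' n psi [:: gen_idx a; gen_idx b; gen_idx c] ->
  cube_condition n (rename_gen psi a) (rename_gen psi b) (rename_gen psi c).
Proof.
set T := [:: _; _; _] => chk psiT.
have ia : idx_in T a by rewrite /idx_in !inE eqxx.
have ib : idx_in T b by rewrite /idx_in !inE eqxx ?orbT.
have ic : idx_in T c by rewrite /idx_in !inE eqxx ?orbT.
move=> fca fac fcb fbc; rewrite !(complement_rename psiT ic) //.
move: chk; rewrite /cube_checkb.
case H1: (complement n' c a) => [[fca0 fac0]|] //=.
case H2: (complement n' c b) => [[fcb0 fbc0]|] //= chk [<- <-] [<- <-].
have /andP[ifca ifac] := complement_idx_in H1 ic ia.
have /andP[ifcb ifbc] := complement_idx_in H2 ic ib.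
rewrite (reversing_rename psiT) //.
case E: (reversing n' 20 fca0 fcb0) chk => [r1 r2| |] //= chk.
have /andP[ir1 ir2] := reversing_idx_in ifca ifcb E.
split.
- move/eqP; rewrite (rename_gen_eq psiT) // => /eqP ab; subst b; rewrite eqxx in chk.
  rewrite -!map_cat; apply: (sbeq_rename psiT); first exact: rewrites_to_sound.
  by rewrite all_cat ifac ir1.
- move=> nab; have /negbTE ab : a != b by apply: contra_not_neq nab => ->.
  rewrite ab in chk.
  case H3: (complement n' a b) chk => [[fab0 fba0]|] // /hasP [w0 Hw /andP[/eqP tk Hv]].
  exists (map (rename_gen psi) fab0), (map (rename_gen psi) fba0),
    (map (rename_gen psi) (drop (size fab0) w0)).
  split; rewrite -?map_cat.
  + by rewrite (complement_rename psiT) // H3.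
  + apply: (sbeq_rename psiT); last by rewrite all_cat ifac ir1.
    rewrite -{1}tk cat_take_drop; apply: rewrite_closure_sound Hw => w.
    by rewrite inE => /eqP ->; exact: sbeq_refl.
  + apply: (sbeq_rename psiT); last by rewrite all_cat ifbc ir2.
    exact: rewrites_to_sound.
Qed.

Definition same_pattern (L : seq (nat * nat)) : bool :=
  all (fun x => all (fun y => ((x.1 == y.1) == (x.2 == y.2)) &&
                             ((x.1 == y.1.+1) == (x.2 == y.2.+1))) L) L.

Lemma same_pattern_eq L x y : same_pattern L -> x \in L -> y \in L ->
  (x.1 == y.1) = (x.2 == y.2) /\ (x.1 == y.1.+1) = (x.2 == y.2.+1).
Proof.
move=> /allP LP xL yL; have /allP/(_ y yL)/andP[/eqP e1 /eqP e2] := LP x xL.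
by split.
Qed.

(* Sort the three indices and shrink each gap to at most 2. *)
Lemma pattern_in_5 i j k : exists i' j' k',
  [/\ 0 < i' < 6, 0 < j' < 6, 0 < k' < 6 & same_pattern [:: (i, i'); (j, j'); (k, k')]].
Proof.
case: (leqP i j) => h1; case: (leqP j k) => h2; case: (leqP i k) => h3; try lia;
  [ exists 1, (1 + minn (j - i) 2), (1 + minn (j - i) 2 + minn (k - j) 2)
  | exists 1, (1 + minn (k - i) 2 + minn (j - k) 2), (1 + minn (k - i) 2)
  | exists (1 + minn (i - k) 2), (1 + minn (i - k) 2 + minn (j - i) 2), 1
  | exists (1 + minn (i - j) 2), 1, (1 + minn (i - j) 2 + minn (k - i) 2)
  | exists (1 + minn (k - j) 2 + minn (i - k) 2), 1, (1 + minn (k - j) 2)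
  | exists (1 + minn (j - k) 2 + minn (i - j) 2), (1 + minn (j - k) 2), 1 ];
  split; try lia; rewrite /same_pattern /=; repeat (apply/andP; split); apply/eqP; lia.
Qed.

Definition pattern_map (i j k i' j' k' : nat) (p : nat) : nat :=
  if p == i' then i else if p == j' then j else k.

Section PatternMap.
Variables i j k i' j' k' : nat.
Let L := [:: (i, i'); (j, j'); (k, k')].
Hypothesis pat : same_pattern L.

Lemma pattern_map_vals :
  [/\ pattern_map i j k i' j' k' i' = i, pattern_map i j k i' j' k' j' = j
    & pattern_map i j k i' j' k' k' = k].
Proof.
have func x y x' : (x, y) \in L -> (x', y) \in L -> x = x'.
  by move=> xL x'L; have [e _] := same_pattern_eq pat xL x'L; apply/eqP; rewrite e /=.
have mi : (i, i') \in L by rewrite !inE eqxx.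
have mj : (j, j') \in L by rewrite !inE eqxx ?orbT.
have mk : (k, k') \in L by rewrite !inE eqxx ?orbT.
rewrite /pattern_map eqxx; split => //.
- by case: eqP => [E|_]; [move: mj; rewrite E; exact: func | rewrite eqxx].
- case: eqP => [E|_]; first by move: mk; rewrite E; exact: func.
  by case: eqP => // E; move: mk; rewrite E; exact: func.
Qed.

Lemma pattern_map_embedding n : valid_idx n i -> valid_idx n j -> valid_idx n k ->
  0 < i' < 6 -> 0 < j' < 6 -> 0 < k' < 6 ->
  index_embedding 6 n (pattern_map i j k i' j' k') [:: i'; j'; k'].
Proof.
move=> vi vj vk bi bj bk; have [ei ej ek] := pattern_map_vals.
have key p : p \in [:: i'; j'; k'] -> exists2 x, x \in L &
    [/\ x.2 = p, pattern_map i j k i' j' k' p = x.1, valid_idx n x.1 & valid_idx 6 x.2].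
  rewrite !inE => /or3P[] /eqP ->.
  - by exists (i, i'); rewrite ?inE ?eqxx //; split => //; rewrite /valid_idx; lia.
  - by exists (j, j'); rewrite ?inE ?eqxx ?orbT //; split => //; rewrite /valid_idx; lia.
  - by exists (k, k'); rewrite ?inE ?eqxx ?orbT //; split => //; rewrite /valid_idx; lia.
move=> p q /key [x xL [<- -> vx1 vx2]] /key [y yL [<- -> _ _]].
by have [e1 e2] := same_pattern_eq pat xL yL; split; rewrite // vx1 vx2.
Qed.

End PatternMap.

Definition with_idx (a : gen) (i : nat) : gen := if a is sg _ then sg i else xg i.

Lemma cube_condition_all n a b c : cube_condition n a b c.
Proof.
move=> fca fac fcb fbc H1 H2.
have [vc va] := complement_valid_idx H1; have [_ vb] := complement_valid_idx H2.
have [i' [j' [k' [bi bj bk pat]]]] := pattern_in_5 (gen_idx a) (gen_idx b) (gen_idx c).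
have psiT := pattern_map_embedding pat va vb vc bi bj bk.
have [ei ej ek] := pattern_map_vals pat.
have letter d p : 0 < p < 6 -> with_idx d p \in letters.
  move=> bp; have hp : p \in iota 1 5 by rewrite mem_iota; lia.
  by rewrite mem_cat; case: d => x; rewrite ?(map_f sg hp) ?(map_f xg hp) ?orbT.
have chk : cube_checkb 6 (with_idx a i') (with_idx b j') (with_idx c k').
  by move: cube_checkb_6 => /allP/(_ _ (letter a i' bi))/allP/(_ _ (letter b j' bj))
    /allP/(_ _ (letter c k' bk)).
have idx d p : gen_idx (with_idx d p) = p by case: d.
have rename_with psi d p : rename_gen psi (with_idx d p) = with_idx d (psi p) by case: d.
have with_idxK d : with_idx d (gen_idx d) = d by case: d.
have := cube_condition_rename chk; rewrite !idx => /(_ _ _ psiT).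
by rewrite !rename_with ei ej ek !with_idxK; apply.
Qed.

Section Divisibility.
Variable n : nat.

Lemma sbeq_cons_split a b X Y :
  sbeq n (a :: X) (b :: Y) -> complement_split n a X b Y.
Proof. exact/sbeq_complement_split/cube_condition_all. Qed.

Lemma sbeq_cancel p U V : sbeq n (p ++ U) (p ++ V) -> sbeq n U V.
Proof.
by elim: p => [//|a p IH] /= /sbeq_cons_split; rewrite /complement_split eqxx.
Qed.

Definition ldivides (u w : seq gen) : Prop := exists t, sbeq n w (u ++ t).

Lemma ldivides_refl w : ldivides w w.
Proof. by exists [::]; rewrite cats0; exact: sbeq_refl. Qed.

Lemma ldivides_cat u t : ldivides u (u ++ t).
Proof. by exists t; exact: sbeq_refl. Qed.

Lemma ldivides_nil w : ldivides [::] w.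
Proof. by exists w; exact: sbeq_refl. Qed.

Lemma ldivides_trans u v w : ldivides u v -> ldivides v w -> ldivides u w.
Proof.
move=> [s vs] [t wt]; exists (s ++ t); rewrite catA.
by apply: sbeq_trans wt _; exact: sbeq_catr.
Qed.

Lemma ldivides_sbeql u v w : sbeq n u v -> ldivides u w -> ldivides v w.
Proof. by move=> uv [t wt]; exists t; apply: sbeq_trans wt _; exact: sbeq_catr. Qed.

Lemma ldivides_sbeqr u v w : sbeq n v w -> ldivides u v -> ldivides u w.
Proof. by move=> vw [t vt]; exists t; exact: sbeq_trans (sbeq_sym vw) vt. Qed.

Lemma ldivides_catl p u w : ldivides u w -> ldivides (p ++ u) (p ++ w).
Proof. by move=> [t wt]; exists t; rewrite -catA; exact: sbeq_catl. Qed.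

Lemma ldivides_cancel p u w : ldivides (p ++ u) (p ++ w) -> ldivides u w.
Proof. by move=> [t wt]; exists t; apply: (@sbeq_cancel p); rewrite catA. Qed.

Lemma ldivides_size u w : ldivides u w -> size u <= size w.
Proof. by move=> [t /sbeq_size ->]; rewrite size_cat leq_addr. Qed.

Lemma ldivides_size_sbeq u w : ldivides u w -> size w <= size u -> sbeq n w u.
Proof.
move=> [[|x t] wt]; first by rewrite cats0 in wt.
by rewrite (sbeq_size wt) size_cat /= addnS ltnNge leq_addr.
Qed.

Definition common_braid_multiple (w a d : seq gen) : Prop :=
  exists2 m, braid_word n m & [/\ ldivides m w, ldivides a m & ldivides d m].

Definition braid_ldivisors_directed (w : seq gen) : Prop :=
  forall a d, braid_word n a -> braid_word n d -> ldivides a w -> ldivides d w ->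
  common_braid_multiple w a d.

Lemma common_braid_multiple_catl p w a d : braid_word n p ->
  common_braid_multiple w a d -> common_braid_multiple (p ++ w) (p ++ a) (p ++ d).
Proof.
move=> bp [m bm [mw am dm]]; exists (p ++ m); first by rewrite braid_word_cat bp.
by split; apply: ldivides_catl.
Qed.

Section DistinctHeads.
Variables (N : nat) (c e : gen) (f g X Y Z : seq gen).
Hypotheses (IH : forall w, size w < N -> braid_ldivisors_directed w)
  (ltXN : size X < N) (ltYN : size Y < N)
  (bc : braid_word n [:: c]) (be : braid_word n [:: e])
  (ce : complement n c e = Some (f, g))
  (XZ : sbeq n X (f ++ Z)) (YZ : sbeq n Y (g ++ Z)).

Lemma common_multiple_cofactor a X' f' : braid_word n a -> braid_word n f' ->
  size X' < N -> ldivides a X' -> sbeq n X' (f' ++ Z) ->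
  exists2 q, braid_word n q & ldivides q Z /\ forall m, ldivides q m -> ldivides a (f' ++ m).
Proof.
move=> ba bf ltN aX XZ'.
have [m bm [mX am [q mq]]] := IH ltN ba bf aX (ex_intro _ Z XZ').
exists q; first by move: bm; rewrite (sbeq_braid mq) braid_word_cat => /andP[].
split.
- apply: (@ldivides_cancel f'); apply: ldivides_sbeqr XZ' _.
  exact: ldivides_sbeql mq mX.
- move=> m' qm'; apply: ldivides_trans am _.
  exact: ldivides_sbeql (sbeq_sym mq) (ldivides_catl f' qm').
Qed.

Lemma common_braid_multiple_distinct_heads a d :
  braid_word n a -> braid_word n d -> ldivides a X -> ldivides d Y ->
  common_braid_multiple (c :: X) (c :: a) (e :: d).
Proof.
move=> ba bd aX dY.
have sg1 x : braid_word n [:: x] -> is_sg x by case/andP=> _ /andP[].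
have [bf bg] := complement_braid (sg1 c bc) (sg1 e be) ce.
have [q1 bq1 [q1Z aq1]] := common_multiple_cofactor ba bf ltXN aX XZ.
have [q2 bq2 [q2Z dq2]] := common_multiple_cofactor bd bg ltYN dY YZ.
have ltZN : size Z < N.
  by apply: leq_ltn_trans ltXN; rewrite (sbeq_size XZ) size_cat leq_addl.
have [m bm [mZ q1m q2m]] := IH ltZN bq1 bq2 q1Z q2Z.
exists (c :: f ++ m); first by rewrite -cat1s !braid_word_cat bc bf.
split.
- apply: ldivides_sbeqr (sbeq_cons c (sbeq_sym XZ)) _.
  exact: (ldivides_catl (c :: f)).
- exact: (ldivides_catl [:: c]) (aq1 _ q1m).
- apply: ldivides_sbeqr (sbeq_sym (sbeq_catr m (complement_sbeq ce))) _.
  exact: (ldivides_catl [:: e]) (dq2 _ q2m).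
Qed.

End DistinctHeads.

Lemma braid_ldivisors_directed_all w : braid_ldivisors_directed w.
Proof.
have [N] := ubnP (size w); elim: N w => [//|N IH] w ltwN a d ba bd aw dw.
case: a ba aw => [|c a] ba aw.
  by exists d => //; split => //; [exact: ldivides_nil | exact: ldivides_refl].
case: d bd dw => [|e d] bd dw.
  by exists (c :: a) => //; split => //; [exact: ldivides_refl | exact: ldivides_nil].
move: (ba) (bd); rewrite -[c :: a]/([:: c] ++ a) -[e :: d]/([:: e] ++ d).
rewrite !braid_word_cat => /andP[bc ba'] /andP[be bd'].
have [[u wu] [v wv]] := (aw, dw).
have ltN : size (a ++ u) < N by move: ltwN; rewrite (sbeq_size wu).
have E := sbeq_trans (sbeq_sym wu) wv; have [/= sE] := sbeq_size E.
have wE : sbeq n (c :: a ++ u) w := sbeq_sym wu.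
move: (sbeq_cons_split E); rewrite /complement_split.
case: eqP => [<- E' | _ [f [g [Z [ce XZ YZ]]]]].
- have /(common_braid_multiple_catl bc) [m bm [mw am dm]] :
      common_braid_multiple (a ++ u) a d.
    by apply: (IH _ ltN) => //; [exact: ldivides_cat | exists v].
  by exists m => //; split => //; apply: ldivides_sbeqr wE _.
- have ltN' : size (d ++ v) < N by rewrite -sE.
  have [m bm [mw am dm]] := common_braid_multiple_distinct_heads IH
    ltN ltN' bc be ce XZ YZ
    ba' bd' (ldivides_cat a u) (ldivides_cat d v).
  by exists m => //; split => //; apply: ldivides_sbeqr wE _.
Qed.

End Divisibility.

Lemma ex_maxn_Prop (P : nat -> Prop) N : (exists k, P k) ->
  (forall k, P k -> k <= N) -> exists2 k, P k & forall j, P j -> j <= k.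
Proof.
move=> exP ubP; pose b k := if excluded_middle_informative (P k) then true else false.
have bP k : reflect (P k) (b k).
  by rewrite /b; case: excluded_middle_informative => ?; constructor.
have exb : exists k, b k by have [k /bP] := exP; exists k.
have ubb k : b k -> k <= N by move/bP/ubP.
by case: (ex_maxnP exb ubb) => k /bP Pk kmax; exists k => // j /bP /kmax.
Qed.

Section Greatest.
Variable n : nat.

Lemma valid_cofactor w u t : valid_word n w -> sbeq n w (u ++ t) -> valid_word n t.
Proof. by move=> vw /sbeq_valid; rewrite vw valid_word_cat => /esym/andP[]. Qed.

Lemma greatest_left_braid_divisor_unique w d d' : greatest_left_braid_divisor n w d ->
  greatest_left_braid_divisor n w d' -> sbeq n d' d.
Proof.
move=> [bd [dw Gd]] [bd' [d'w Gd']].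
have [b [_ db]] := Gd d' bd' d'w; have [b' [_ d'b']] := Gd' d bd dw.
have d'd : ldivides n d' d by exists b.
have dd' : ldivides n d d' by exists b'.
exact: ldivides_size_sbeq dd' (ldivides_size d'd).
Qed.

Lemma greatest_left_braid_divisor_exists w : valid_word n w ->
  exists d, greatest_left_braid_divisor n w d.
Proof.
move=> vw; pose P k := exists2 d, size d = k & braid_word n d /\ ldivides n d w.
have [k [d sd [bd dw]] kmax] : exists2 k, P k & forall j, P j -> j <= k.
  apply: (@ex_maxn_Prop P (size w)); last by move=> k [d <- [_ /ldivides_size]].
  by exists 0, [::] => //; split => //; exact: ldivides_nil.
exists d; split => //; split.
  by have [u wu] := dw; exists u; split => //; exact: valid_cofactor vw wu.
move=> a ba [v [_ wv]].
have [m bm [mw [p mp] dm]] := braid_ldivisors_directed_all ba bd (ex_intro _ v wv) dw.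
have md : sbeq n m d.
  have ltmd : size m <= size d by rewrite sd; apply: kmax; exists m.
  exact: ldivides_size_sbeq dm ltmd.
have dp := sbeq_trans (sbeq_sym md) mp.
by exists p; split => //; apply: valid_cofactor dp; case/andP: bd.
Qed.

Lemma greatest_right_of_left w D : greatest_left_braid_divisor n (rev w) D ->
  greatest_right_braid_divisor n w (rev D).
Proof.
move=> [bD [[U [vU wU]] GD]]; split; first by rewrite braid_word_rev.
split.
  exists (rev U); split; first by rewrite valid_word_rev.
  by rewrite -(revK w) -rev_cat; apply: sbeq_rev.
move=> a ba [v [vv wv]].
have [b [vb Db]] : exists b, valid_word n b /\ sbeq n D (rev a ++ b).
  apply: GD; first by rewrite braid_word_rev.
  exists (rev v); split; first by rewrite valid_word_rev.
  by rewrite -rev_cat; apply: sbeq_rev.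
exists (rev b); split; first by rewrite valid_word_rev.
by rewrite -(revK a) -rev_cat; apply: sbeq_rev.
Qed.

Lemma greatest_left_of_right w d : greatest_right_braid_divisor n w d ->
  greatest_left_braid_divisor n (rev w) (rev d).
Proof.
move=> [bd [[u [vu wu]] Gd]]; split; first by rewrite braid_word_rev.
split.
  exists (rev u); split; first by rewrite valid_word_rev.
  by rewrite -rev_cat; apply: sbeq_rev.
move=> a ba [v [vv wv]].
have [b [vb db]] : exists b, valid_word n b /\ sbeq n d (b ++ rev a).
  apply: Gd; first by rewrite braid_word_rev.
  exists (rev v); split; first by rewrite valid_word_rev.
  by rewrite -(revK w) -rev_cat; apply: sbeq_rev.
exists (rev b); split; first by rewrite valid_word_rev.
by have := sbeq_rev db; rewrite rev_cat revK.
Qed.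

End Greatest.

Theorem corollary2p2 (n : nat) (hn : 2 <= n) (w : seq gen) (hw : valid_word n w) :
  (exists d, greatest_left_braid_divisor n w d /\
     forall d', greatest_left_braid_divisor n w d' -> sbeq n d' d) /\
  (exists d, greatest_right_braid_divisor n w d /\
     forall d', greatest_right_braid_divisor n w d' -> sbeq n d' d).
Proof.
split.
- have [d Gd] := greatest_left_braid_divisor_exists hw.
  by exists d; split=> // d' Gd'; exact: greatest_left_braid_divisor_unique Gd Gd'.
- have [D GD] : exists D, greatest_left_braid_divisor n (rev w) D.
    by apply: greatest_left_braid_divisor_exists; rewrite valid_word_rev.
  exists (rev D); split=> [|d' Gd']; first exact: greatest_right_of_left.
  have := greatest_left_braid_divisor_unique GD (greatest_left_of_right Gd').
  by move/sbeq_rev; rewrite revK.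
Qed.
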